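(* Assume $0<|\mathscr{C}|\leq\tfrac12$. Then for $z\in\mathbb{U}$ (except at points where $d_{-1}(z)$ or $d_1(z)$ vanishes) the characteristic equation $d_{-1}(z)\kappa^{-1}+d_0(z)+d_1(z)\kappa=0$ of the fourth-order D1Q3 scheme has two roots, one stable root $\kappa_s(z)\in\mathbb{D}$ and one unstable root $\kappa_u(z)\in\mathbb{U}$. They extend to $z\in\mathbb{S}$ (extensions still denoted $\kappa_s,\kappa_u$), and $$\kappa_s(1)=\begin{cases}-1,&\mathscr{C}<0,\\1,&\mathscr{C}>0,\end{cases}\qquad \kappa_u(1)=\begin{cases}1,&\mathscr{C}<0,\\-1,&\mathscr{C}>0,\end{cases}\qquad \kappa_s(-1)=\kappa_u(-1)=1.$$
   Context: $\mathbb{D}=\{|z|<1\}$, $\mathbb{S}=\{|z|=1\}$, $\mathbb{U}=\{|z|>1\}$. Fourth-order D1Q3 scheme: $q=3$, velocities $c_1=0$, $c_2=1$, $c_3=-1$, $M=\begin{pmatrix}1&1&1\\0&1&-1\\0&1&1\end{pmatrix}$, equilibrium $\epsilon=(1,\mathscr{C},\tfrac13(1+2\mathscr{C}^2))$, $s_2=s_3=2$, $K:=I_3+\mathrm{diag}(s_1,2,2)(\epsilon e_1^{\mathsf T}-I_3)$ ($s_1$ arbitrary), $\hat E(\kappa):=M\mathrm{diag}(1,\kappa^{-1},\kappa)M^{-1}K$. Characteristic equation: $\det(zI_3-\hat E(\kappa))=d_{-1}(z)\kappa^{-1}+d_0(z)+d_1(z)\kappa$, where explicitly $d_{-1}(z)=-\tfrac13(2\mathscr{C}^2+3\mathscr{C}-2)z^2+\tfrac13(2\mathscr{C}^2-3\mathscr{C}-2)z$,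 $d_0(z)=z^3+\tfrac13(4\mathscr{C}^2-1)z^2-\tfrac13(4\mathscr{C}^2-1)z-1$, $d_1(z)=-\tfrac13(2\mathscr{C}^2-3\mathscr{C}-2)z^2+\tfrac13(2\mathscr{C}^2+3\mathscr{C}-2)z$. *)

From Stdlib Require Import Reals.
From Coquelicot Require Import Coquelicot.
Open Scope R_scope.

Definition dm1 (Cc : R) (z : C) : C :=
  (RtoC (-(1/3) * (2*Cc^2 + 3*Cc - 2)) * z * z
   + RtoC ((1/3) * (2*Cc^2 - 3*Cc - 2)) * z)%C.

Definition d0 (Cc : R) (z : C) : C :=
  (z * z * z + RtoC ((1/3) * (4*Cc^2 - 1)) * z * z
   - RtoC ((1/3) * (4*Cc^2 - 1)) * z - RtoC 1)%C.

Definition d1 (Cc : R) (z : C) : C :=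
  (RtoC (-(1/3) * (2*Cc^2 - 3*Cc - 2)) * z * z
   + RtoC ((1/3) * (2*Cc^2 + 3*Cc - 2)) * z)%C.

Definition charEq (Cc : R) (z kappa : C) : C :=
  (dm1 Cc z / kappa + d0 Cc z + d1 Cc z * kappa)%C.

Definition Udom (Cc : R) (z : C) : Prop :=
  1 < Cmod z /\ dm1 Cc z <> RtoC 0 /\ d1 Cc z <> RtoC 0.

From Stdlib Require Import Reals Lra Psatz ClassicalDescription.
From Coquelicot Require Import Coquelicot.
Open Scope R_scope.

(* Write Q(z,k) = k * charEq(z,k) = d1 k^2 + d0 k + d_{-1}.  An energy identity
   (|k|^2 - 1) B(z,k) + (|z|^2 - 1) A(z,k) = Re (Q(z,k) * conj ((1+z)(1+kz)(k+z)))
   with A >= 0 for |C| <= 1/2 shows that for |z| > 1 no root is unimodular.  The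
   quantity |d1|^2 + |d_{-1}|^2 - (|d0|^2 + |d0^2 - 4 d1 d_{-1}|)/2, which equals
   |d1|^2 (1 - |k1|^2)(1 - |k2|^2), is continuous in z, hence by the intermediate value
   theorem along rays it is negative on all of U, as it is for large |z|: exactly one
   root lies in the disc.  Approaching a point z0 of the circle from U the roots tend
   to those at z0, and the identity shows that a unimodular root k at z0 is the limit
   of the stable root exactly when B(z0,k) > 0; the two roots of z0, when distinct,
   cannot both be unimodular with B = 0, which determines the limits.  At z = 1 the
   roots are 1 and -1 with B(1,1) = 16 C and B(1,-1) = 0; at z = -1, 1 is a double
   root. *)

(** * Complex numbers *)

Ltac Cunfold := unfold Cdiv, Cminus, Cinv, Copp, Cplus, Cmult, RtoC, Cconj; cbn [fst snd].

Lemma Cmult_integral (a b : C) : (a * b)%C = 0%C -> a = 0%C \/ b = 0%C.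
Proof.
  intro H. destruct (Ceq_dec a 0) as [Ha | Ha]; [now left | right].
  replace b with (/ a * (a * b))%C by (field; exact Ha). rewrite H. ring.
Qed.

Lemma Cmod_sqr (z : C) : Cmod z ^ 2 = fst z * fst z + snd z * snd z.
Proof. rewrite Cmod2_alt. unfold Re, Im. ring. Qed.

Lemma Cmod_parallelogram (x y : C) :
  Cmod (x + y) ^ 2 + Cmod (x - y) ^ 2 = 2 * (Cmod x ^ 2 + Cmod y ^ 2).
Proof. rewrite !Cmod_sqr. destruct x, y. Cunfold. ring. Qed.

Lemma Cmod_triangle_bounds (r k : C) : Cmod k - Cmod (r - k) <= Cmod r <= Cmod k + Cmod (r - k).
Proof.
  split.
  - assert (T := Cmod_triangle r (- (r - k))). rewrite Cmod_opp in T.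
    replace (r + - (r - k))%C with k in T by ring. lra.
  - replace r with (k + (r - k))%C at 1 by ring. apply Cmod_triangle.
Qed.

Lemma Cconj_RtoC (r : R) : Cconj (RtoC r) = RtoC r.
Proof. Cunfold. f_equal. ring. Qed.

Lemma Cconj_unit (z : C) : Cmod z = 1 -> Cconj z = (/ z)%C.
Proof.
  intro Hz. assert (Hz2 := Cmod_sqr z). rewrite Hz in Hz2.
  destruct z as [x y]. cbn [fst snd] in Hz2.
  assert (E : x ^ 2 + y ^ 2 = 1) by (simpl in Hz2 |- *; lra).
  Cunfold. rewrite E. f_equal; field.
Qed.

Section ComplexContinuity.

Context {U : UniformSpace}.
Implicit Types (f g : U -> C) (x : U).

Lemma continuous_C_intro f x :
  continuous (fun y => fst (f y)) x -> continuous (fun y => snd (f y)) x ->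
  continuous f x.
Proof.
  intros H1 H2. apply filterlim_locally. intro eps.
  generalize (filter_and _ _ (proj1 (filterlim_locally _ _) H1 eps)
                              (proj1 (filterlim_locally _ _) H2 eps)).
  apply filter_imp. intros y [B1 B2]. split; assumption.
Qed.

Lemma continuous_C_fst f x : continuous f x -> continuous (fun y => fst (f y)) x.
Proof.
  intro H. apply (continuous_comp f fst); [exact H |].
  destruct (f x); apply continuous_fst.
Qed.

Lemma continuous_C_snd f x : continuous f x -> continuous (fun y => snd (f y)) x.
Proof.
  intro H. apply (continuous_comp f snd); [exact H |].
  destruct (f x); apply continuous_snd.
Qed.

Lemma continuous_Cplus f g x :
  continuous f x -> continuous g x -> continuous (fun y => f y + g y)%C x.
Proof.
  intros Hf Hg. apply continuous_C_intro; cbn [Cplus fst snd];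
  apply (continuous_plus (V := R_NormedModule));
  auto using continuous_C_fst, continuous_C_snd.
Qed.

Lemma continuous_Copp f x : continuous f x -> continuous (fun y => - f y)%C x.
Proof.
  intro Hf. apply continuous_C_intro; cbn [Copp fst snd];
  apply (continuous_opp (V := R_NormedModule));
  auto using continuous_C_fst, continuous_C_snd.
Qed.

Lemma continuous_Cminus f g x :
  continuous f x -> continuous g x -> continuous (fun y => f y - g y)%C x.
Proof. intros Hf Hg. apply continuous_Cplus; [| apply continuous_Copp]; assumption. Qed.

Lemma continuous_Cmult f g x :
  continuous f x -> continuous g x -> continuous (fun y => f y * g y)%C x.
Proof.
  intros Hf Hg.
  apply continuous_C_fst in Hf as Hf1. apply continuous_C_snd in Hf as Hf2.
  apply continuous_C_fst in Hg as Hg1. apply continuous_C_snd in Hg as Hg2.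
  apply continuous_C_intro; cbn [Cmult fst snd].
  - apply (continuous_minus (V := R_NormedModule));
    apply (continuous_mult (K := R_AbsRing)); assumption.
  - apply (continuous_plus (V := R_NormedModule));
    apply (continuous_mult (K := R_AbsRing)); assumption.
Qed.

Lemma continuous_Cinv f x :
  continuous f x -> f x <> 0%C -> continuous (fun y => / f y)%C x.
Proof.
  intros Hf Hx.
  apply continuous_C_fst in Hf as Hf1. apply continuous_C_snd in Hf as Hf2.
  assert (Hn : continuous (fun y => fst (f y) ^ 2 + snd (f y) ^ 2) x).
  { apply (continuous_plus (V := R_NormedModule));
    apply (continuous_mult (K := R_AbsRing)); auto;
    apply (continuous_mult (K := R_AbsRing)); auto; apply continuous_const. }
  assert (Hn0 : fst (f x) ^ 2 + snd (f x) ^ 2 <> 0).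
  { rewrite <- Cmod2_alt. apply pow_nonzero. intro E. apply Hx, Cmod_eq_0, E. }
  assert (Hinv : continuous (fun y => / (fst (f y) ^ 2 + snd (f y) ^ 2)) x)
    by (apply (continuous_comp _ Rinv); [exact Hn | apply continuous_Rinv, Hn0]).
  apply continuous_C_intro; cbn [Cinv fst snd]; unfold Rdiv;
    apply (continuous_mult (K := R_AbsRing)); try assumption.
  apply (continuous_opp (V := R_NormedModule)), Hf2.
Qed.

Lemma continuous_Cdiv f g x :
  continuous f x -> continuous g x -> g x <> 0%C ->
  continuous (fun y => f y / g y)%C x.
Proof. intros. apply continuous_Cmult; [| apply continuous_Cinv]; assumption. Qed.

Lemma continuous_Cmod f x : continuous f x -> continuous (fun y => Cmod (f y)) x.
Proof.
  intro Hf. apply (continuous_comp f (fun w : C => Cmod w)); [exact Hf |].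
  apply (filterlim_norm (V := C_NormedModule)).
Qed.

Lemma continuous_Cmod_sub f x :
  continuous f x -> forall eps, 0 < eps -> locally x (fun y => Cmod (f y - f x) < eps).
Proof.
  intros Hf eps Heps.
  assert (Hs : 0 < eps / sqrt 2) by (apply Rdiv_lt_0_compat; [lra | apply Rlt_sqrt2_0]).
  generalize (proj1 (filterlim_locally _ _) Hf (mkposreal _ Hs)).
  apply filter_imp. intros y B.
  generalize (C_NormedModule_mixin_compat2 _ _ _ B). cbn [pos].
  replace (sqrt 2 * (eps / sqrt 2)) with eps by (field; apply sqrt2_neq_0).
  trivial.
Qed.

End ComplexContinuity.

Lemma continuous_R_near {U : UniformSpace} (f : U -> R) (x : U) :
  continuous f x -> forall eps, 0 < eps -> locally x (fun y => Rabs (f y - f x) < eps).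
Proof.
  intros Hf eps Heps.
  generalize (proj1 (filterlim_locally _ _) Hf (mkposreal _ Heps)).
  apply filter_imp. intros y B. exact B.
Qed.

Lemma continuous_RtoC (t : R) : continuous (fun s : R => RtoC s) t.
Proof. apply continuous_C_intro; [apply continuous_id | apply continuous_const]. Qed.

Lemma filterlim_within_Cmod (D : C -> Prop) (f : C -> C) (z0 l : C) :
  (forall eps, 0 < eps -> locally z0 (fun z => D z -> Cmod (f z - l) < eps)) ->
  filterlim f (within D (locally z0)) (locally l).
Proof.
  intro H. apply filterlim_locally. intro eps. unfold within.
  generalize (H eps (cond_pos eps)). apply filter_imp. intros z Hz HD.
  apply C_NormedModule_mixin_compat1, Hz, HD.
Qed.

Definition Csqrt (w : C) : C :=
  let re := sqrt ((Cmod w + fst w) / 2) in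
  let im := sqrt ((Cmod w - fst w) / 2) in
  if Rlt_dec (snd w) 0 then (re, - im) else (re, im).

Lemma Csqrt_sqr (w : C) : (Csqrt w * Csqrt w)%C = w.
Proof.
  assert (Hm := Cmod_sqr w). assert (Ha := re_le_Cmod w).
  destruct w as [a b]. unfold Csqrt, Re in *. cbn [fst snd] in *.
  set (m := Cmod (a, b)) in *.
  assert (Ha1 := Rle_abs a). assert (Ha2 := Rabs_maj2 a).
  assert (Hre := sqrt_sqrt ((m + a) / 2) ltac:(lra)).
  assert (Him := sqrt_sqrt ((m - a) / 2) ltac:(lra)).
  assert (Hprod : sqrt ((m + a) / 2) * sqrt ((m - a) / 2) = Rabs b / 2).
  { rewrite <- sqrt_mult by lra.
    replace ((m + a) / 2 * ((m - a) / 2)) with ((Rabs b / 2) ^ 2)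
      by (assert (Hb2 := pow2_abs b); simpl in *; nra).
    apply sqrt_pow2. assert (Hb := Rabs_pos b). lra. }
  destruct (Rlt_dec b 0) as [Hb | Hb]; Cunfold; f_equal.
  - nra.
  - rewrite Rabs_left in Hprod by exact Hb. nra.
  - nra.
  - rewrite Rabs_right in Hprod by lra. nra.
Qed.

(** * Quadratic equations *)

Definition upair_eq {T : Type} (x y p q : T) : Prop :=
  (x = p /\ y = q) \/ (x = q /\ y = p).

Lemma upair_eq_trans {T : Type} (x y r s p q : T) :
  upair_eq x y p q -> upair_eq r s p q -> upair_eq x y r s.
Proof. unfold upair_eq. intros [[-> ->] | [-> ->]] [[-> ->] | [-> ->]]; auto. Qed.

Section Quadratic.

Variables a b e : C.

Definition qdisc : C := (b * b - 4 * a * e)%C.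
Definition qroot_p : C := ((- b + Csqrt qdisc) / (2 * a))%C.
Definition qroot_m : C := ((- b - Csqrt qdisc) / (2 * a))%C.

(* [|a|^2 (1 - |p|^2) (1 - |q|^2)] for the roots [p, q], written without the roots
   (see [qpsi_roots]) so that it is continuous in the coefficients even where [a = 0]. *)
Definition qpsi : R := Cmod a ^ 2 + Cmod e ^ 2 - (Cmod b ^ 2 + Cmod qdisc) / 2.

Hypothesis a_neq0 : a <> 0%C.

Lemma qroots_prod : (a * (qroot_p * qroot_m))%C = e.
Proof.
  assert (Hs := Csqrt_sqr qdisc). unfold qroot_p, qroot_m, qdisc in *.
  set (s := Csqrt _) in *.
  replace e with ((b * b - s * s) / (4 * a))%C by (rewrite Hs; field; exact a_neq0).
  field. exact a_neq0.
Qed.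

Lemma qroots_sum : (qroot_p + qroot_m)%C = (- b / a)%C.
Proof. unfold qroot_p, qroot_m. field. exact a_neq0. Qed.

Lemma quad_factor (k : C) :
  (a * k * k + b * k + e)%C = (a * (k - qroot_p) * (k - qroot_m))%C.
Proof.
  rewrite <- qroots_prod.
  replace b with (- a * (qroot_p + qroot_m))%C at 1
    by (rewrite qroots_sum; field; exact a_neq0).
  ring.
Qed.

Lemma quad_root_iff (k : C) :
  (a * k * k + b * k + e)%C = 0%C <-> k = qroot_p \/ k = qroot_m.
Proof.
  rewrite quad_factor. split.
  - intro H. apply Cmult_integral in H as [H | H]; [| right; apply Ceq_minus, H].
    apply Cmult_integral in H as [H | H]; [contradiction | left; apply Ceq_minus, H].
  - intros [H | H]; rewrite H; ring.
Qed.

Lemma qpsi_roots :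
  qpsi = Cmod a ^ 2 * (1 - Cmod qroot_p ^ 2) * (1 - Cmod qroot_m ^ 2).
Proof.
  assert (Hs := Csqrt_sqr qdisc). set (s := Csqrt qdisc) in *.
  assert (Hp : (a * qroot_p)%C = ((- b + s) / 2)%C)
    by (unfold qroot_p; fold s; field; exact a_neq0).
  assert (Hm : (a * qroot_m)%C = ((- b - s) / 2)%C)
    by (unfold qroot_m; fold s; field; exact a_neq0).
  assert (Hpar : Cmod (a * qroot_p) ^ 2 + Cmod (a * qroot_m) ^ 2
                 = (Cmod b ^ 2 + Cmod qdisc) / 2).
  { assert (H2 : RtoC 2 <> 0%C) by (intro E; injection E; lra).
    rewrite Hp, Hm, <- Hs, !Cmod_div, !Cmod_mult, Cmod_R, Rabs_pos_eq by (exact H2 || lra).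
    assert (P := Cmod_parallelogram (- b) s). rewrite Cmod_opp in P.
    unfold Cminus in P |- *. simpl in P |- *. nra. }
  assert (Hprod : Cmod (a * qroot_p) ^ 2 * Cmod (a * qroot_m) ^ 2 = Cmod a ^ 2 * Cmod e ^ 2).
  { rewrite <- qroots_prod. rewrite !Cmod_mult. ring. }
  rewrite !Cmod_mult in Hpar, Hprod.
  assert (Ha := proj1 (Cmod_gt_0 a) a_neq0).
  assert (He : Cmod e ^ 2 = Cmod a ^ 2 * Cmod qroot_p ^ 2 * Cmod qroot_m ^ 2).
  { apply (Rmult_eq_reg_l (Cmod a ^ 2)); [| apply pow_nonzero; lra].
    rewrite <- Hprod. ring. }
  unfold qpsi. rewrite <- Hpar, He. ring.
Qed.

End Quadratic.

Lemma qpsi_zero_unit_root (a b e : C) :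
  qpsi a b e = 0 -> exists k, Cmod k = 1 /\ (a * k * k + b * k + e)%C = 0%C.
Proof.
  intro H. destruct (Ceq_dec a 0) as [Ha | Ha].
  - subst a. unfold qpsi, qdisc in H.
    replace (b * b - 4 * 0 * e)%C with (b * b)%C in H by ring.
    rewrite Cmod_mult, Cmod_0 in H.
    assert (Heb : Cmod e = Cmod b)
      by (assert (Hb := Cmod_ge_0 b); assert (He := Cmod_ge_0 e); simpl in H; nra).
    destruct (Ceq_dec b 0) as [Hb | Hb].
    + exists 1%C. split; [apply Cmod_1 |].
      rewrite Hb, Cmod_0 in Heb. rewrite Hb, (Cmod_eq_0 e Heb). ring.
    + exists (- e / b)%C. split.
      * rewrite Cmod_div, Cmod_opp, Heb by exact Hb.
        field. apply Rgt_not_eq, Cmod_gt_0, Hb.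
      * field. exact Hb.
  - rewrite qpsi_roots in H by exact Ha.
    assert (Ha2 : Cmod a ^ 2 <> 0) by (apply pow_nonzero, Rgt_not_eq, Cmod_gt_0, Ha).
    apply Rmult_integral in H as [H | H]; [apply Rmult_integral in H as [H | H] |];
      [contradiction | exists (qroot_p a b e) | exists (qroot_m a b e)];
      (split; [| apply quad_root_iff; auto]).
    + assert (Hm := Cmod_ge_0 (qroot_p a b e)). simpl in H. nra.
    + assert (Hm := Cmod_ge_0 (qroot_m a b e)). simpl in H. nra.
Qed.

Lemma Cmod_half_lt (x y : C) (eps : R) :
  Cmod x < eps -> Cmod y < eps ->
  Cmod ((x + y) / 2) < eps /\ Cmod ((x - y) / 2) < eps.
Proof.
  intros Hx Hy. assert (H2 : RtoC 2 <> 0%C) by (intro E; injection E; lra).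
  rewrite !Cmod_div, Cmod_R, Rabs_pos_eq by (exact H2 || lra).
  assert (T1 := Cmod_triangle x y). assert (T2 := Cmod_triangle x (- y)).
  rewrite Cmod_opp in T2. unfold Cminus. split; lra.
Qed.

Lemma half_sums_close (s s0 d d0 : C) (eps : R) :
  Cmod (s - s0) < eps -> Cmod (d * d - d0 * d0) < eps * eps ->
  (Cmod ((s + d) / 2 - (s0 + d0) / 2) < eps /\ Cmod ((s - d) / 2 - (s0 - d0) / 2) < eps) \/
  (Cmod ((s + d) / 2 - (s0 - d0) / 2) < eps /\ Cmod ((s - d) / 2 - (s0 + d0) / 2) < eps).
Proof.
  intros Hs Hd.
  assert (Hprod : Cmod (d - d0) * Cmod (d + d0) < eps * eps).
  { rewrite <- Cmod_mult. replace ((d - d0) * (d + d0))%C with (d * d - d0 * d0)%C by ring.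
    exact Hd. }
  assert (Hs0 := Cmod_ge_0 (s - s0)). assert (Hm := Cmod_ge_0 (d - d0)).
  destruct (Rlt_or_le (Cmod (d - d0)) eps) as [H | H]; [left | right].
  - destruct (Cmod_half_lt (s - s0) (d - d0) eps Hs H) as [H1 H2].
    replace ((s + d) / 2 - (s0 + d0) / 2)%C with ((s - s0 + (d - d0)) / 2)%C by field.
    replace ((s - d) / 2 - (s0 - d0) / 2)%C with ((s - s0 - (d - d0)) / 2)%C by field.
    split; assumption.
  - assert (H' : Cmod (d + d0) < eps)
      by (destruct (Rlt_or_le (Cmod (d + d0)) eps) as [H' | H']; [exact H' | nra]).
    destruct (Cmod_half_lt (s - s0) (d + d0) eps Hs H') as [H1 H2].
    replace ((s + d) / 2 - (s0 - d0) / 2)%C with ((s - s0 + (d + d0)) / 2)%C by field.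
    replace ((s - d) / 2 - (s0 + d0) / 2)%C with ((s - s0 - (d + d0)) / 2)%C by field.
    split; assumption.
Qed.

Lemma qroots_close (a b e a0 b0 e0 : C) (eps : R) :
  a <> 0%C -> a0 <> 0%C ->
  Cmod (b / a - b0 / a0) < eps ->
  Cmod (qdisc a b e / (a * a) - qdisc a0 b0 e0 / (a0 * a0)) < eps * eps ->
  forall j o, upair_eq j o (qroot_p a0 b0 e0) (qroot_m a0 b0 e0) ->
  exists rj ro, upair_eq rj ro (qroot_p a b e) (qroot_m a b e) /\
    Cmod (rj - j) < eps /\ Cmod (ro - o) < eps.
Proof.
  intros Ha Ha0 HS HD j o Hjo.
  set (d := (Csqrt (qdisc a b e) / a)%C). set (d0 := (Csqrt (qdisc a0 b0 e0) / a0)%C).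
  assert (Hs : Cmod (- (b / a) - - (b0 / a0)) < eps)
    by (rewrite <- Cmod_opp; replace (- (- (b / a) - - (b0 / a0)))%C with (b / a - b0 / a0)%C
          by ring; exact HS).
  assert (Hd : Cmod (d * d - d0 * d0) < eps * eps).
  { replace (d * d - d0 * d0)%C with (qdisc a b e / (a * a) - qdisc a0 b0 e0 / (a0 * a0))%C;
      [exact HD |].
    unfold d, d0. rewrite <- (Csqrt_sqr (qdisc a b e)) at 1.
    rewrite <- (Csqrt_sqr (qdisc a0 b0 e0)) at 1. field. split; assumption. }
  replace (qroot_p a b e) with ((- (b / a) + d) / 2)%C by (unfold qroot_p, d; field; auto).
  replace (qroot_m a b e) with ((- (b / a) - d) / 2)%C by (unfold qroot_m, d; field; auto).
  replace (qroot_p a0 b0 e0) with ((- (b0 / a0) + d0) / 2)%C in Hjo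
    by (unfold qroot_p, d0; field; auto).
  replace (qroot_m a0 b0 e0) with ((- (b0 / a0) - d0) / 2)%C in Hjo
    by (unfold qroot_m, d0; field; auto).
  set (p := ((- (b / a) + d) / 2)%C). set (m := ((- (b / a) - d) / 2)%C).
  destruct Hjo as [[-> ->] | [-> ->]];
    destruct (half_sums_close _ _ _ _ _ Hs Hd) as [[H1 H2] | [H1 H2]].
  - exists p, m. unfold upair_eq. auto.
  - exists m, p. unfold upair_eq. auto.
  - exists m, p. unfold upair_eq. auto.
  - exists p, m. unfold upair_eq. auto.
Qed.

Lemma continuous_Rpow {U : UniformSpace} (f : U -> R) (x : U) (n : nat) :
  continuous f x -> continuous (fun y => f y ^ n) x.
Proof.
  intro Hf. induction n as [| n IH]; [apply continuous_const |].
  apply (continuous_mult (K := R_AbsRing)); assumption.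
Qed.

Ltac auto_continuous :=
  repeat match goal with
  | |- continuous (fun _ => ?c) _ => apply continuous_const
  | |- continuous (fun y => y) _ => apply continuous_id
  | |- continuous fst (_, _) => apply continuous_fst
  | |- continuous snd (_, _) => apply continuous_snd
  | |- continuous (fun _ => _ + _) _ => apply (continuous_plus (V := R_NormedModule))
  | |- continuous (fun _ => _ - _) _ => apply (continuous_minus (V := R_NormedModule))
  | |- continuous (fun _ => _ * _) _ => apply (continuous_mult (K := R_AbsRing))
  | |- continuous (fun _ => _ / ?r) _ => unfold Rdiv
  | |- continuous (fun _ => _ ^ _) _ => apply continuous_Rpow
  | |- continuous (fun _ => Cmod _) _ => apply continuous_Cmod
  | |- continuous (fun _ => _ + _)%C _ => apply continuous_Cplus
  | |- continuous (fun _ => _ - _)%C _ => apply continuous_Cminus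
  | |- continuous (fun _ => - _)%C _ => apply continuous_Copp
  | |- continuous (fun _ => _ * _)%C _ => apply continuous_Cmult
  | |- continuous (Cmult ?a) ?x => apply (continuous_Cmult (fun _ => a) (fun y => y) x)
  | |- continuous _ _ => assumption
  end.

Lemma qroots_continuous {U : UniformSpace} (a b e : U -> C) (x : U) :
  continuous a x -> continuous b x -> continuous e x -> a x <> 0%C ->
  forall eps, 0 < eps -> locally x (fun y => a y <> 0%C /\
    forall j o, upair_eq j o (qroot_p (a x) (b x) (e x)) (qroot_m (a x) (b x) (e x)) ->
    exists rj ro, upair_eq rj ro (qroot_p (a y) (b y) (e y)) (qroot_m (a y) (b y) (e y)) /\
      Cmod (rj - j) < eps /\ Cmod (ro - o) < eps).
Proof.
  intros Ha Hb He Hax eps Heps.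
  assert (Hax2 : (a x * a x)%C <> 0%C)
    by (intro E; apply Cmult_integral in E as [E | E]; contradiction).
  assert (HS : continuous (fun y => b y / a y)%C x) by (apply continuous_Cdiv; assumption).
  assert (HD : continuous (fun y => qdisc (a y) (b y) (e y) / (a y * a y))%C x)
    by (unfold qdisc; apply continuous_Cdiv; [auto_continuous .. | exact Hax2]).
  assert (Hne : locally x (fun y => a y <> 0%C)).
  { generalize (continuous_Cmod_sub a x Ha _ (proj1 (Cmod_gt_0 _) Hax)).
    apply filter_imp. intros y Hy E.
    rewrite E in Hy. replace (0 - a x)%C with (- a x)%C in Hy by ring.
    rewrite Cmod_opp in Hy. lra. }
  generalize (filter_and _ _ Hne (filter_and _ _
    (continuous_Cmod_sub _ _ HS _ Heps)
    (continuous_Cmod_sub _ _ HD _ (Rmult_lt_0_compat _ _ Heps Heps)))).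
  apply filter_imp. intros y [Hy [HSy HDy]]. split; [exact Hy |].
  apply qroots_close; assumption.
Qed.

Lemma Cmod_quadratic_le (al be : R) (w : C) :
  Rabs al <= 1 -> Rabs be <= 1 -> 1 <= Cmod w ->
  Cmod (al * w * w + be * w) <= 2 * Cmod w ^ 2.
Proof.
  intros Ha Hb Hw. eapply Rle_trans; [apply Cmod_triangle |].
  rewrite !Cmod_mult, !Cmod_R.
  assert (Ha0 := Rabs_pos al). assert (Hb0 := Rabs_pos be). simpl. nra.
Qed.

Lemma Cmod_cubic_ge (ga : R) (w : C) :
  Rabs ga <= 1 -> 3 <= Cmod w ->
  Cmod w ^ 3 / 2 <= Cmod (w * w * w + ga * w * w - ga * w - 1).
Proof.
  intros Hg Hw.
  assert (Hrest : Cmod (ga * w * w - ga * w - 1) <= Cmod w ^ 2 + Cmod w + 1).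
  { unfold Cminus. eapply Rle_trans; [apply Cmod_triangle |].
    rewrite Cmod_opp, Cmod_1.
    eapply Rle_trans; [apply Rplus_le_compat_r, Cmod_triangle |].
    rewrite Cmod_opp, !Cmod_mult, !Cmod_R.
    assert (Hg0 := Rabs_pos ga). simpl. nra. }
  assert (Htri := Cmod_triangle (w * w * w + ga * w * w - ga * w - 1)
                                (- (ga * w * w - ga * w - 1))).
  rewrite Cmod_opp in Htri.
  replace (w * w * w + ga * w * w - ga * w - 1 + - (ga * w * w - ga * w - 1))%C with (w * w * w)%C
    in Htri by ring.
  rewrite !Cmod_mult in Htri. simpl in *. nra.
Qed.

(** * The characteristic equation of the D1Q3 scheme *)

Section D1Q3.

Variable c : R.

Definition charPoly (z k : C) : C := (d1 c z * k * k + d0 c z * k + dm1 c z)%C.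
Definition root_p (z : C) : C := qroot_p (d1 c z) (d0 c z) (dm1 c z).
Definition root_m (z : C) : C := qroot_m (d1 c z) (d0 c z) (dm1 c z).

Lemma charEq_zero_iff (z k : C) : k <> 0%C -> charEq c z k = 0%C <-> charPoly z k = 0%C.
Proof.
  intro Hk.
  replace (charEq c z k) with (charPoly z k / k)%C by (unfold charEq, charPoly; field; exact Hk).
  split; intro H.
  - replace (charPoly z k) with (charPoly z k / k * k)%C by (field; exact Hk). rewrite H. ring.
  - rewrite H. field. exact Hk.
Qed.

Lemma charPoly_root_iff (z k : C) :
  d1 c z <> 0%C -> charPoly z k = 0%C <-> k = root_p z \/ k = root_m z.
Proof. intro H. exact (quad_root_iff _ _ _ H k). Qed.

Definition E0 : R := 2 * (1 - c ^ 2) / 3.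
Definition Ep : R := (2 * c + 1) * (c + 1) / 6.
Definition Em : R := (1 - 2 * c) * (1 - c) / 6.

Definition Acoef (z k : C) : R :=
  E0 * Cmod (1 + k * z) ^ 2 * Cmod (k + z) ^ 2 + Ep * Cmod (1 + z) ^ 2 * Cmod (k + z) ^ 2
  + Em * Cmod (1 + z) ^ 2 * Cmod (1 + k * z) ^ 2.

Definition Bcoef (z k : C) : R :=
  Cmod (1 + z) ^ 2 * (Ep * Cmod z ^ 2 * Cmod (k + z) ^ 2 - Em * Cmod (1 + k * z) ^ 2).

(* [charPoly z k = - (E0 (1-z)(1+kz)(k+z) + Ep (1-kz)(1+z)(k+z) + Em (k-z)(1+z)(1+kz))];
   multiply by the conjugate of [(1+z)(1+kz)(k+z)] and use [Re ((1-w)(1+ conj w)) = 1 - |w|^2]. *)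
Lemma charPoly_energy (z k : C) :
  (Cmod k ^ 2 - 1) * Bcoef z k + (Cmod z ^ 2 - 1) * Acoef z k
  = Re (charPoly z k * Cconj ((1 + z) * (1 + k * z) * (k + z))).
Proof.
  unfold Acoef, Bcoef, E0, Ep, Em, charPoly, d1, d0, dm1. rewrite !Cmod_sqr.
  destruct z, k. unfold Re. Cunfold. field.
Qed.

(* With [Bcoef_circle]: at a unimodular root with [Bcoef = 0] the last summand vanishes,
   so either a special factor vanishes or [d1 k^2 = dm1], i.e. [k] is a double root. *)
Lemma critical_identity (z k : C) :
  ((1 + k * z) * (k + z) * (d1 c z * k * k - dm1 c z))%C
  = (z * (k * k - 1) * charPoly z k
     + 2 * k * z * (1 + z) * (Ep * (k + z) * (k + z) - Em * (1 + k * z) * (1 + k * z)))%C.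
Proof. unfold charPoly, Ep, Em, d1, d0, dm1. destruct z, k. Cunfold. f_equal; field. Qed.

Lemma Bcoef_circle (z k : C) : Cmod z = 1 -> Cmod k = 1 ->
  (Bcoef z k * k * z * z)%C
  = ((1 + z) * (1 + z) * (Ep * (k + z) * (k + z) - Em * (1 + k * z) * (1 + k * z)))%C.
Proof.
  intros Hz Hk.
  assert (Hz0 : z <> 0%C) by (intro E; rewrite E, Cmod_0 in Hz; lra).
  assert (Hk0 : k <> 0%C) by (intro E; rewrite E, Cmod_0 in Hk; lra).
  unfold Bcoef. rewrite Hz, pow1, Rmult_1_r.
  rewrite RtoC_mult, RtoC_minus, !RtoC_mult, !Cmod2_conj.
  rewrite !Cplus_conj, !Cmult_conj, Cconj_RtoC, (Cconj_unit z Hz), (Cconj_unit k Hk).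
  field. split; assumption.
Qed.

Hypothesis c_neq0 : c <> 0.
Hypothesis c_bound : -1 / 2 <= c <= 1 / 2.

Lemma E0_pos : 0 < E0.
Proof. unfold E0. nra. Qed.

Lemma Ep_nonneg : 0 <= Ep.
Proof. unfold Ep. nra. Qed.

Lemma Em_nonneg : 0 <= Em.
Proof. unfold Em. nra. Qed.

Lemma Acoef_ge (z k : C) : E0 * Cmod (1 + k * z) ^ 2 * Cmod (k + z) ^ 2 <= Acoef z k.
Proof.
  unfold Acoef.
  assert (0 <= Ep * Cmod (1 + z) ^ 2 * Cmod (k + z) ^ 2)
    by (apply Rmult_le_pos; [apply Rmult_le_pos |]; auto using Ep_nonneg, pow2_ge_0).
  assert (0 <= Em * Cmod (1 + z) ^ 2 * Cmod (1 + k * z) ^ 2)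
    by (apply Rmult_le_pos; [apply Rmult_le_pos |]; auto using Em_nonneg, pow2_ge_0).
  lra.
Qed.

Lemma Acoef_nonneg (z k : C) : 0 <= Acoef z k.
Proof.
  assert (0 <= E0 * Cmod (1 + k * z) ^ 2 * Cmod (k + z) ^ 2)
    by (apply Rmult_le_pos; [apply Rmult_le_pos |]; auto using Rlt_le, E0_pos, pow2_ge_0).
  assert (HA := Acoef_ge z k). lra.
Qed.

Lemma Acoef_pos (z k : C) : (1 + k * z)%C <> 0%C -> (k + z)%C <> 0%C -> 0 < Acoef z k.
Proof.
  intros H1 H2.
  assert (P1 : 0 < Cmod (1 + k * z) ^ 2) by (apply pow_lt, Cmod_gt_0, H1).
  assert (P2 : 0 < Cmod (k + z) ^ 2) by (apply pow_lt, Cmod_gt_0, H2).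
  assert (0 < E0 * Cmod (1 + k * z) ^ 2 * Cmod (k + z) ^ 2)
    by (apply Rmult_lt_0_compat; [apply Rmult_lt_0_compat |]; auto using E0_pos).
  assert (HA := Acoef_ge z k). lra.
Qed.

Lemma charPoly_root_balance (z k : C) :
  charPoly z k = 0%C -> (Cmod k ^ 2 - 1) * Bcoef z k = - ((Cmod z ^ 2 - 1) * Acoef z k).
Proof.
  intro H. assert (E := charPoly_energy z k).
  rewrite H, Cmult_0_l in E. unfold Re in E. simpl in E. lra.
Qed.

Lemma no_unimodular_root (z k : C) : 1 < Cmod z -> charPoly z k = 0%C -> Cmod k <> 1.
Proof.
  intros Hz HQ Hk.
  assert (H1 : (1 + k * z)%C <> 0%C).
  { intro E. assert (Ekz : (k * z)%C = Copp 1)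
      by (replace (k * z)%C with (1 + k * z - 1)%C by ring; rewrite E; ring).
    apply (f_equal Cmod) in Ekz. rewrite Cmod_mult, Hk, Cmod_opp, Cmod_1 in Ekz. lra. }
  assert (H2 : (k + z)%C <> 0%C).
  { intro E. assert (Ek : k = (- z)%C)
      by (replace k with (k + z - z)%C by ring; rewrite E; ring).
    rewrite Ek, Cmod_opp in Hk. lra. }
  assert (B := charPoly_root_balance z k HQ). rewrite Hk in B.
  assert (A := Acoef_pos z k H1 H2).
  assert (0 < Cmod z ^ 2 - 1) by (simpl; nra).
  assert (0 < (Cmod z ^ 2 - 1) * Acoef z k) by (apply Rmult_lt_0_compat; assumption).
  simpl in B. lra.
Qed.

Definition psi (z : C) : R := qpsi (d1 c z) (d0 c z) (dm1 c z).

Lemma psi_neq0 (z : C) : 1 < Cmod z -> psi z <> 0.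
Proof.
  intros Hz H. destruct (qpsi_zero_unit_root _ _ _ H) as [k [Hk Hroot]].
  exact (no_unimodular_root z k Hz Hroot Hk).
Qed.

Lemma continuous_psi (z : C) : continuous psi z.
Proof. unfold psi, qpsi, qdisc, d1, d0, dm1. auto_continuous. Qed.

Lemma psi_far (z : C) : 9 <= Cmod z -> psi z < 0.
Proof.
  intro Hz.
  assert (B1 : Cmod (d1 c z) <= 2 * Cmod z ^ 2)
    by (apply Cmod_quadratic_le; try (apply Rabs_le; split); nra).
  assert (B2 : Cmod (dm1 c z) <= 2 * Cmod z ^ 2)
    by (apply Cmod_quadratic_le; try (apply Rabs_le; split); nra).
  assert (B3 : Cmod z ^ 3 / 2 <= Cmod (d0 c z))
    by (apply Cmod_cubic_ge; try (apply Rabs_le; split); nra).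
  set (r := Cmod z) in *.
  assert (E1 : Cmod (d1 c z) ^ 2 <= (2 * r ^ 2) ^ 2)
    by (apply pow_incr; split; [apply Cmod_ge_0 | exact B1]).
  assert (E2 : Cmod (dm1 c z) ^ 2 <= (2 * r ^ 2) ^ 2)
    by (apply pow_incr; split; [apply Cmod_ge_0 | exact B2]).
  assert (E3 : (r ^ 3 / 2) ^ 2 <= Cmod (d0 c z) ^ 2)
    by (apply pow_incr; split; [assert (0 < r ^ 3) by (apply pow_lt; lra); lra | exact B3]).
  assert (K : 2 * (2 * r ^ 2) ^ 2 < (r ^ 3 / 2) ^ 2 / 2).
  { assert (0 < r ^ 4) by (apply pow_lt; lra). assert (81 <= r ^ 2) by nra.
    replace ((r ^ 3 / 2) ^ 2 / 2) with (r ^ 2 * r ^ 4 / 8) by field.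
    replace (2 * (2 * r ^ 2) ^ 2) with (8 * r ^ 4) by ring. nra. }
  assert (D := Cmod_ge_0 (qdisc (d1 c z) (d0 c z) (dm1 c z))).
  unfold psi, qpsi. lra.
Qed.

Lemma psi_neg (z : C) : 1 < Cmod z -> psi z < 0.
Proof.
  intro Hz. destruct (Rlt_or_le (psi z) 0) as [H | H]; [exact H | exfalso].
  set (f := fun t : R => psi (t * z)%C).
  assert (Hf : continuity f).
  { intro t. apply continuity_pt_filterlim.
    apply (continuous_comp (fun s : R => (s * z)%C) psi); [| apply continuous_psi].
    apply continuous_Cmult; [apply continuous_RtoC | apply continuous_const]. }
  assert (Hmod : forall t, 1 <= t -> Cmod (t * z)%C = t * Cmod z)
    by (intros t Ht; rewrite Cmod_mult, Cmod_R, Rabs_pos_eq by lra; reflexivity).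
  assert (F1 : f 1 = psi z) by (unfold f; f_equal; ring).
  assert (F9 : f 9 < 0) by (apply psi_far; rewrite Hmod by lra; lra).
  destruct (IVT_cor f 1 9 Hf ltac:(lra) ltac:(nra)) as [t [Ht Hft]].
  apply (psi_neq0 (t * z)%C); [rewrite Hmod by lra; nra | exact Hft].
Qed.

Lemma roots_split_by_circle (z : C) : 1 < Cmod z -> d1 c z <> 0%C ->
  (Cmod (root_p z) < 1 /\ 1 < Cmod (root_m z)) \/ (1 < Cmod (root_p z) /\ Cmod (root_m z) < 1).
Proof.
  intros Hz Hd. assert (P := psi_neg z Hz).
  unfold psi in P. rewrite qpsi_roots in P by exact Hd. fold (root_p z) (root_m z) in P.
  assert (Hd2 : 0 < Cmod (d1 c z) ^ 2) by (apply pow_lt, Cmod_gt_0, Hd).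
  assert (Hp := Cmod_ge_0 (root_p z)). assert (Hm := Cmod_ge_0 (root_m z)).
  assert (N : (1 - Cmod (root_p z) ^ 2) * (1 - Cmod (root_m z) ^ 2) < 0).
  { destruct (Rlt_or_le ((1 - Cmod (root_p z) ^ 2) * (1 - Cmod (root_m z) ^ 2)) 0) as [N | N];
      [exact N | nra]. }
  destruct (Rlt_or_le (Cmod (root_p z)) 1) as [H1 | H1]; [left | right].
  - assert (0 < 1 - Cmod (root_p z) ^ 2) by (simpl; nra).
    assert (1 - Cmod (root_m z) ^ 2 < 0) by nra.
    split; [exact H1 | simpl in *; nra].
  - assert (1 - Cmod (root_p z) ^ 2 <= 0) by (simpl; nra).
    assert (1 - Cmod (root_p z) ^ 2 < 0 /\ 0 < 1 - Cmod (root_m z) ^ 2) as [] by (split; nra).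
    simpl in *. split; nra.
Qed.

Lemma d1_neq0_circle (z : C) : Cmod z = 1 -> d1 c z <> 0%C.
Proof.
  intros Hz E.
  set (al := - (1 / 3) * (2 * c ^ 2 - 3 * c - 2)). set (be := 1 / 3 * (2 * c ^ 2 + 3 * c - 2)).
  assert (Hz0 : z <> 0%C) by (intro E0; rewrite E0, Cmod_0 in Hz; lra).
  assert (Hlin : (al * z)%C = (- be)%C).
  { assert (F : (z * (al * z + be))%C = 0%C) by (rewrite <- E; unfold d1; fold al be; ring).
    apply Cmult_integral in F as [F | F]; [contradiction |].
    replace (al * z)%C with (al * z + be - be)%C by ring. rewrite F. ring. }
  apply (f_equal Cmod) in Hlin. rewrite Cmod_mult, Hz, Cmod_opp, !Cmod_R, Rmult_1_r in Hlin.
  assert (Hdiff : al - be = 4 / 3 * (1 - c ^ 2)) by (unfold al, be; field).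
  assert (Hsum : al + be = 2 * c) by (unfold al, be; field).
  unfold Rabs in Hlin. destruct (Rcase_abs al), (Rcase_abs be); nra.
Qed.

Lemma roots_at_1 : upair_eq (root_p 1) (root_m 1) 1 (RtoC (-1)).
Proof.
  assert (Hd1 : d1 c 1 = RtoC (2 * c)) by (unfold d1; Cunfold; f_equal; field).
  assert (Hd0 : d0 c 1 = 0%C) by (unfold d0; Cunfold; f_equal; field).
  assert (Hdm1 : dm1 c 1 = RtoC (- (2 * c))) by (unfold dm1; Cunfold; f_equal; field).
  assert (Hnz : d1 c 1 <> 0%C) by (rewrite Hd1; intro E; injection E; lra).
  assert (Hsum := qroots_sum (d1 c 1) (d0 c 1) (dm1 c 1) Hnz).
  fold (root_p 1) (root_m 1) in Hsum. rewrite Hd0 in Hsum.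
  assert (Hm : root_m 1 = (- root_p 1)%C).
  { replace (root_m 1) with (root_p 1 + root_m 1 - root_p 1)%C by ring.
    rewrite Hsum. unfold Cdiv. ring. }
  assert (Hroot : charPoly 1 (root_p 1) = 0%C) by (apply charPoly_root_iff; auto).
  unfold charPoly in Hroot. rewrite Hd1, Hd0, Hdm1 in Hroot.
  assert (F : (RtoC (2 * c) * ((root_p 1 - 1) * (root_p 1 + 1)))%C = 0%C)
    by (rewrite <- Hroot; Cunfold; f_equal; ring).
  apply Cmult_integral in F as [F | F]; [injection F; lra |].
  apply Cmult_integral in F as [F | F]; [left | right].
  - apply Ceq_minus in F. rewrite Hm, F. split; [reflexivity | Cunfold; f_equal; ring].
  - assert (Hp : root_p 1 = RtoC (-1))
      by (replace (root_p 1) with (root_p 1 + 1 - 1)%C by ring; rewrite F; Cunfold; f_equal; ring).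
    rewrite Hm, Hp. split; [reflexivity | Cunfold; f_equal; ring].
Qed.

Lemma roots_at_m1 : root_p (RtoC (-1)) = 1%C /\ root_m (RtoC (-1)) = 1%C.
Proof.
  set (w := 4 / 3 * (1 - c ^ 2)).
  assert (Hd1 : d1 c (RtoC (-1)) = RtoC w) by (unfold d1, w; Cunfold; f_equal; field).
  assert (Hd0 : d0 c (RtoC (-1)) = RtoC (- 2 * w)) by (unfold d0, w; Cunfold; f_equal; field).
  assert (Hdm1 : dm1 c (RtoC (-1)) = RtoC w) by (unfold dm1, w; Cunfold; f_equal; field).
  assert (Hw : w <> 0) by (unfold w; nra).
  assert (Hroot : forall k, charPoly (RtoC (-1)) k = 0%C -> k = 1%C).
  { intros k Hk. unfold charPoly in Hk. rewrite Hd1, Hd0, Hdm1 in Hk.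
    assert (F : (RtoC w * ((k - 1) * (k - 1)))%C = 0%C)
      by (rewrite <- Hk; Cunfold; f_equal; ring).
    apply Cmult_integral in F as [F | F]; [injection F; lra |].
    apply Cmult_integral in F as [F | F]; apply Ceq_minus, F. }
  assert (Hnz : d1 c (RtoC (-1)) <> 0%C) by (rewrite Hd1; intro E; injection E; lra).
  split; apply Hroot, charPoly_root_iff; auto.
Qed.

Lemma Bcoef_1_1 : Bcoef 1 1 = 16 * c.
Proof. unfold Bcoef, Ep, Em. rewrite !Cmod_sqr. Cunfold. field. Qed.

Lemma Bcoef_1_m1 : Bcoef 1 (RtoC (-1)) = 0.
Proof. unfold Bcoef, Ep, Em. rewrite !Cmod_sqr. Cunfold. field. Qed.

Lemma dm1_sub_d1 (z : C) : (dm1 c z - d1 c z)%C = (RtoC (- 2 * c) * z * (z + 1))%C.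
Proof. unfold dm1, d1. destruct z. Cunfold. f_equal; field. Qed.

Lemma critical_unimodular_root (z k : C) :
  Cmod z = 1 -> Cmod k = 1 -> charPoly z k = 0%C -> Bcoef z k = 0 ->
  (1 + z = 0 \/ 1 + k * z = 0 \/ k + z = 0 \/ d1 c z * k * k = dm1 c z)%C.
Proof.
  intros Hz Hk HQ HB.
  set (G := (Ep * (k + z) * (k + z) - Em * (1 + k * z) * (1 + k * z))%C).
  assert (HG : ((1 + z) * ((1 + z) * G))%C = 0%C).
  { assert (E := Bcoef_circle z k Hz Hk). fold G in E. rewrite HB in E.
    rewrite Cmult_assoc, <- E. Cunfold. f_equal; ring. }
  apply Cmult_integral in HG as [H1 | HG]; [now left |].
  apply Cmult_integral in HG as [H1 | HG]; [now left | right].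
  assert (E : ((1 + k * z) * (k + z) * (d1 c z * k * k - dm1 c z))%C = 0%C)
    by (rewrite critical_identity; fold G; rewrite HQ, HG; ring).
  apply Cmult_integral in E as [E | E]; [apply Cmult_integral in E as [E | E] |].
  - now left.
  - now right; left.
  - right; right. apply Ceq_minus, E.
Qed.

Lemma critical_root_circle (z x : C) :
  Cmod z = 1 -> root_p z <> root_m z -> x = root_p z \/ x = root_m z ->
  Cmod x = 1 -> Bcoef z x = 0 -> (1 + x * z = 0 \/ x + z = 0)%C.
Proof.
  intros Hz Hpm Hx Hmod HB.
  assert (Hd := d1_neq0_circle z Hz).
  assert (HQ : charPoly z x = 0%C) by (apply charPoly_root_iff; assumption).
  destruct (critical_unimodular_root z x Hz Hmod HQ HB) as [H | [H | [H | H]]];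
    [exfalso | now left | now right | exfalso].
  - assert (Ez : z = RtoC (-1))
      by (replace z with (1 + z - 1)%C by ring; rewrite H; Cunfold; f_equal; ring).
    apply Hpm. rewrite Ez. destruct roots_at_m1 as [-> ->]. reflexivity.
  - assert (Hx0 : x <> 0%C) by (intro E; rewrite E, Cmod_0 in Hmod; lra).
    assert (Hprod := qroots_prod (d1 c z) (d0 c z) (dm1 c z) Hd).
    fold (root_p z) (root_m z) in Hprod. rewrite <- Hprod in H.
    destruct Hx as [-> | ->]; apply Hpm.
    + assert (F : (d1 c z * root_p z * (root_p z - root_m z))%C = 0%C).
      { replace (d1 c z * root_p z * (root_p z - root_m z))%C
          with (d1 c z * root_p z * root_p z - d1 c z * (root_p z * root_m z))%C by ring.
        rewrite H. ring. }
      apply Cmult_integral in F as [F | F]; [apply Cmult_integral in F as [F | F] |];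
        [contradiction | contradiction | apply Ceq_minus, F].
    + assert (F : (d1 c z * root_m z * (root_m z - root_p z))%C = 0%C).
      { replace (d1 c z * root_m z * (root_m z - root_p z))%C
          with (d1 c z * root_m z * root_m z - d1 c z * (root_p z * root_m z))%C by ring.
        rewrite H. ring. }
      apply Cmult_integral in F as [F | F]; [apply Cmult_integral in F as [F | F] |];
        [contradiction | contradiction | symmetry; apply Ceq_minus, F].
Qed.

Lemma no_double_critical (z : C) :
  Cmod z = 1 -> root_p z <> root_m z ->
  Cmod (root_p z) = 1 -> Bcoef z (root_p z) = 0 ->
  Cmod (root_m z) = 1 -> Bcoef z (root_m z) = 0 -> False.
Proof.
  intros Hz Hpm Hp HBp Hm HBm.
  assert (Hz0 : z <> 0%C) by (intro E; rewrite E, Cmod_0 in Hz; lra).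
  assert (Hd := d1_neq0_circle z Hz).
  assert (Hprod := qroots_prod (d1 c z) (d0 c z) (dm1 c z) Hd).
  fold (root_p z) (root_m z) in Hprod.
  assert (Hunit : (root_p z * root_m z)%C <> 1%C).
  { intro E. rewrite E, Cmult_1_r in Hprod.
    assert (F : (RtoC (- 2 * c) * z * (z + 1))%C = 0%C)
      by (rewrite <- dm1_sub_d1, <- Hprod; ring).
    apply Cmult_integral in F as [F | F]; [apply Cmult_integral in F as [F | F] |].
    - injection F. lra.
    - contradiction.
    - apply Hpm. replace z with (RtoC (-1)) by (replace z with (z + 1 - 1)%C by ring;
                                                 rewrite F; Cunfold; f_equal; ring).
      destruct roots_at_m1 as [-> ->]. reflexivity. }
  destruct (critical_root_circle z (root_p z) Hz Hpm (or_introl eq_refl) Hp HBp) as [P | P],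
           (critical_root_circle z (root_m z) Hz Hpm (or_intror eq_refl) Hm HBm) as [M | M].
  - assert (F : ((root_p z - root_m z) * z)%C = 0%C)
      by (replace ((root_p z - root_m z) * z)%C with ((1 + root_p z * z) - (1 + root_m z * z))%C
            by ring; rewrite P, M; ring).
    apply Cmult_integral in F as [F | F]; [apply Hpm, Ceq_minus, F | contradiction].
  - apply Hunit, Ceq_minus.
    replace (root_p z * root_m z - 1)%C with (root_p z * (root_m z + z) - (1 + root_p z * z))%C
      by ring. rewrite P, M. ring.
  - apply Hunit, Ceq_minus.
    replace (root_p z * root_m z - 1)%C with (root_m z * (root_p z + z) - (1 + root_m z * z))%C
      by ring. rewrite P, M. ring.
  - apply Hpm, Ceq_minus.
    replace (root_p z - root_m z)%C with ((root_p z + z) - (root_m z + z))%C by ring.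
    rewrite P, M. ring.
Qed.

(* A unimodular root [k] at a point of the circle moves into the disc, for [z] entering [U],
   exactly when [Bcoef z k > 0]; see [stable_side_near]. *)
Definition stable_at (z k : C) : Prop := Cmod k < 1 \/ (Cmod k = 1 /\ 0 < Bcoef z k).
Definition determined_at (z k : C) : Prop := Cmod k <> 1 \/ Bcoef z k <> 0.

Lemma continuous_Bcoef (z k : C) :
  continuous (fun w : C * C => Bcoef (fst w) (snd w)) (z, k).
Proof. unfold Bcoef. auto_continuous. Qed.

Lemma stable_side_near (z0 k : C) : determined_at z0 k ->
  exists delta, 0 < delta /\ locally z0 (fun z => forall r, 1 < Cmod z ->
    charPoly z r = 0%C -> Cmod (r - k) < delta -> (Cmod r < 1 <-> stable_at z0 k)).
Proof.
  intro Hdet. unfold stable_at.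
  destruct (Rtotal_order (Cmod k) 1) as [Hk | [Hk | Hk]].
  - exists (1 - Cmod k). split; [lra |].
    apply filter_forall. intros z r _ _ Hr. assert (Hc := Cmod_triangle_bounds r k). lra.
  - destruct Hdet as [Hdet | HB0]; [contradiction |].
    set (B0 := Bcoef z0 k) in *.
    assert (HB := Rabs_pos_lt _ HB0).
    destruct (continuous_R_near _ _ (continuous_Bcoef z0 k) _ HB) as [delta Hdelta].
    exists delta. split; [apply cond_pos |].
    generalize (locally_ball z0 delta). apply filter_imp. intros z Hz r Hz1 HQ Hr.
    assert (Hsign : 0 < Bcoef z r * B0).
    { assert (H := Hdelta (z, r) (conj Hz (C_NormedModule_mixin_compat1 _ _ _ Hr))).
      cbn [fst snd] in H. fold B0 in H.
      unfold Rabs in H, HB. destruct (Rcase_abs (Bcoef z r - B0)), (Rcase_abs B0); nra. }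
    assert (Hbal := charPoly_root_balance z r HQ).
    assert (HA := Acoef_nonneg z r).
    assert (Hz2 : 0 < Cmod z ^ 2 - 1) by (simpl; nra).
    assert (0 <= (Cmod z ^ 2 - 1) * Acoef z r) by (apply Rmult_le_pos; lra).
    assert (Hle : (Cmod r ^ 2 - 1) * Bcoef z r <= 0) by lra.
    assert (Hr0 := Cmod_ge_0 r).
    destruct (Rtotal_order (Cmod r) 1) as [Hlt | [Heq | Hgt]].
    + assert (Cmod r ^ 2 - 1 < 0) by (simpl; nra).
      assert (0 < B0) by nra. tauto.
    + exfalso. exact (no_unimodular_root z r Hz1 HQ Heq).
    + assert (0 < Cmod r ^ 2 - 1) by (simpl; nra).
      assert (B0 < 0) by nra. lra.
  - exists (Cmod k - 1). split; [lra |].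
    apply filter_forall. intros z r _ _ Hr. assert (Hc := Cmod_triangle_bounds r k). lra.
Qed.

(* The branches are anchored at a root whose side is determined; by [no_double_critical]
   there is one unless the two roots coincide. *)
Definition lead_root (z : C) : C :=
  if excluded_middle_informative (determined_at z (root_p z)) then root_p z else root_m z.
Definition trail_root (z : C) : C :=
  if excluded_middle_informative (determined_at z (root_p z)) then root_m z else root_p z.

Definition ks (z : C) : C :=
  if excluded_middle_informative (stable_at z (lead_root z)) then lead_root z else trail_root z.
Definition ku (z : C) : C :=
  if excluded_middle_informative (stable_at z (lead_root z)) then trail_root z else lead_root z.

Lemma lead_trail_roots (z : C) : upair_eq (lead_root z) (trail_root z) (root_p z) (root_m z).
Proof. unfold lead_root, trail_root, upair_eq. destruct excluded_middle_informative; auto. Qed.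

Lemma ks_ku_roots (z : C) : upair_eq (ks z) (ku z) (root_p z) (root_m z).
Proof.
  unfold ks, ku, lead_root, trail_root, upair_eq.
  destruct excluded_middle_informative; destruct excluded_middle_informative; auto.
Qed.

Lemma charEq_ks_ku (z k : C) : d1 c z <> 0%C -> k <> 0%C ->
  charEq c z k = 0%C <-> k = ks z \/ k = ku z.
Proof.
  intros Hd Hk. rewrite charEq_zero_iff, charPoly_root_iff by assumption.
  destruct (ks_ku_roots z) as [[-> ->] | [-> ->]]; tauto.
Qed.

Lemma ks_ku_outside (z : C) : 1 < Cmod z -> d1 c z <> 0%C ->
  Cmod (ks z) < 1 /\ 1 < Cmod (ku z).
Proof.
  intros Hz Hd.
  assert (Hlead : lead_root z = root_p z /\ trail_root z = root_m z).
  { unfold lead_root, trail_root. destruct excluded_middle_informative as [_ | Hn]; [auto |].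
    exfalso. apply Hn. left.
    destruct (roots_split_by_circle z Hz Hd) as [[H _] | [H _]]; lra. }
  unfold ks, ku. destruct Hlead as [-> ->]. unfold stable_at.
  destruct excluded_middle_informative as [Hs | Hs];
    destruct (roots_split_by_circle z Hz Hd) as [[Hp Hm] | [Hp Hm]]; try lra; tauto.
Qed.

Lemma roots_continuous (z0 : C) : d1 c z0 <> 0%C ->
  forall eps, 0 < eps -> locally z0 (fun z => d1 c z <> 0%C /\
    forall j o, upair_eq j o (root_p z0) (root_m z0) ->
    exists rj ro, upair_eq rj ro (root_p z) (root_m z) /\
      Cmod (rj - j) < eps /\ Cmod (ro - o) < eps).
Proof.
  apply qroots_continuous; [unfold d1 | unfold d0 | unfold dm1]; auto_continuous.
Qed.

Lemma ks_ku_near (z0 j o : C) :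
  d1 c z0 <> 0%C -> upair_eq j o (root_p z0) (root_m z0) -> determined_at z0 j ->
  forall eps, 0 < eps -> locally z0 (fun z => Udom c z ->
    Cmod (ks z - (if excluded_middle_informative (stable_at z0 j) then j else o)) < eps /\
    Cmod (ku z - (if excluded_middle_informative (stable_at z0 j) then o else j)) < eps).
Proof.
  intros Hd Hjo Hdet eps Heps.
  destruct (stable_side_near z0 j Hdet) as [delta [Hdelta Hside]].
  assert (Hm : 0 < Rmin delta eps) by (apply Rmin_pos; assumption).
  generalize (filter_and _ _ Hside (roots_continuous z0 Hd _ Hm)). apply filter_imp.
  intros z [Hs [_ Hclose]] [Hz [_ Hdz]].
  destruct (Hclose j o Hjo) as [rj [ro [Hr [Hrj Hro]]]].
  assert (Qj : charPoly z rj = 0%C)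
    by (apply charPoly_root_iff; [exact Hdz | destruct Hr as [[-> _] | [-> _]]; auto]).
  assert (Sj := Hs rj Hz Qj (Rlt_le_trans _ _ _ Hrj (Rmin_l _ _))).
  assert (Hrj' := Rlt_le_trans _ _ _ Hrj (Rmin_r _ _)).
  assert (Hro' := Rlt_le_trans _ _ _ Hro (Rmin_r _ _)).
  destruct (ks_ku_outside z Hz Hdz) as [Hks Hku].
  destruct (upair_eq_trans _ _ _ _ _ _ (ks_ku_roots z) Hr) as [[E1 E2] | [E1 E2]];
    rewrite E1 in Hks |- *; rewrite E2 in Hku |- *;
    destruct excluded_middle_informative as [S | S]; try tauto.
  assert (Cmod rj < 1) by (apply Sj, S). lra.
Qed.

Lemma not_determined (z k : C) : ~ determined_at z k -> Cmod k = 1 /\ Bcoef z k = 0.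
Proof.
  unfold determined_at. intro H.
  split; [destruct (Req_dec (Cmod k) 1) | destruct (Req_dec (Bcoef z k) 0)]; tauto.
Qed.

Lemma lead_root_determined (z0 : C) : Cmod z0 = 1 ->
  root_p z0 = root_m z0 \/ determined_at z0 (lead_root z0).
Proof.
  intro Hz0. unfold lead_root.
  destruct excluded_middle_informative as [D | D]; [now right |].
  destruct (Ceq_dec (root_p z0) (root_m z0)) as [E | E]; [now left | right].
  destruct (excluded_middle_informative (determined_at z0 (root_m z0))) as [D' | D'];
    [exact D' | exfalso].
  apply not_determined in D as [Hp HBp]. apply not_determined in D' as [Hm HBm].
  exact (no_double_critical z0 Hz0 E Hp HBp Hm HBm).
Qed.

Lemma ks_ku_continuous_circle (z0 : C) : Cmod z0 = 1 ->
  forall eps, 0 < eps -> locally z0 (fun z => Udom c z ->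
    Cmod (ks z - ks z0) < eps /\ Cmod (ku z - ku z0) < eps).
Proof.
  intros Hz0 eps Heps. assert (Hd := d1_neq0_circle z0 Hz0).
  destruct (lead_root_determined z0 Hz0) as [E | D].
  - assert (Hk0 : ks z0 = root_p z0 /\ ku z0 = root_p z0)
      by (rewrite E; destruct (ks_ku_roots z0) as [[-> ->] | [-> ->]]; rewrite ?E; auto).
    destruct Hk0 as [-> ->].
    generalize (roots_continuous z0 Hd eps Heps). apply filter_imp.
    intros z [_ Hclose] _.
    destruct (Hclose (root_p z0) (root_p z0)) as [rj [ro [Hr [Hrj Hro]]]];
      [left; rewrite E; auto |].
    destruct (upair_eq_trans _ _ _ _ _ _ (ks_ku_roots z) Hr) as [[-> ->] | [-> ->]]; auto.
  - exact (ks_ku_near z0 (lead_root z0) (trail_root z0) Hd (lead_trail_roots z0) D eps Heps).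
Qed.

Lemma ks_ku_on_U (z : C) : Udom c z ->
  Cmod (ks z) < 1 /\ 1 < Cmod (ku z) /\
  (forall k : C, k <> 0%C -> charEq c z k = 0%C <-> k = ks z \/ k = ku z).
Proof.
  intros [Hz [_ Hd]]. destruct (ks_ku_outside z Hz Hd) as [Hs Hu].
  split; [exact Hs | split; [exact Hu |]].
  intros k Hk. apply charEq_ks_ku; assumption.
Qed.

Lemma ks_ku_limits_circle (z0 : C) : Cmod z0 = 1 ->
  filterlim ks (within (Udom c) (locally z0)) (locally (ks z0)) /\
  filterlim ku (within (Udom c) (locally z0)) (locally (ku z0)).
Proof.
  intro Hz0.
  split; apply filterlim_within_Cmod; intros eps Heps;
    generalize (ks_ku_continuous_circle z0 Hz0 eps Heps);
    apply filter_imp; intros z H Hz; apply H, Hz.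
Qed.

Lemma ks_ku_at_m1 : ks (RtoC (-1)) = 1%C /\ ku (RtoC (-1)) = 1%C.
Proof.
  destruct roots_at_m1 as [Hp Hm].
  destruct (ks_ku_roots (RtoC (-1))) as [[-> ->] | [-> ->]]; rewrite ?Hp, ?Hm; auto.
Qed.

Lemma lead_trail_at_1 : lead_root 1 = 1%C /\ trail_root 1 = RtoC (-1).
Proof.
  unfold lead_root, trail_root, determined_at.
  destruct roots_at_1 as [[-> ->] | [-> ->]];
    destruct excluded_middle_informative as [D | D]; auto.
  - exfalso. apply D. right. rewrite Bcoef_1_1. lra.
  - exfalso. destruct D as [D | D]; apply D.
    + rewrite Cmod_R. apply Rabs_m1.
    + apply Bcoef_1_m1.
Qed.

Lemma stable_at_1_1 : stable_at 1 1 <-> 0 < c.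
Proof. unfold stable_at. rewrite Cmod_1, Bcoef_1_1. lra. Qed.

Lemma ks_ku_at_1_pos : 0 < c -> ks 1 = 1%C /\ ku 1 = RtoC (-1).
Proof.
  intro Hc. unfold ks, ku. destruct lead_trail_at_1 as [-> ->].
  destruct excluded_middle_informative as [S | S]; [auto |].
  exfalso. apply S, stable_at_1_1, Hc.
Qed.

Lemma ks_ku_at_1_neg : c < 0 -> ks 1 = RtoC (-1) /\ ku 1 = 1%C.
Proof.
  intro Hc. unfold ks, ku. destruct lead_trail_at_1 as [-> ->].
  destruct excluded_middle_informative as [S | S]; [| auto].
  exfalso. apply stable_at_1_1 in S. lra.
Qed.

End D1Q3.

Lemma courant_bounds (Cc : R) : 0 < Rabs Cc <= 1 / 2 -> Cc <> 0 /\ -1 / 2 <= Cc <= 1 / 2.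
Proof. intros [H1 H2]. unfold Rabs in *. destruct (Rcase_abs Cc); repeat split; lra. Qed.

Theorem mainTheorem11 (Cc : R) (hC : 0 < Rabs Cc <= 1/2) :
  exists ks ku : C -> C,
    (* on U (minus exceptional points): exactly two roots, one stable, one unstable *)
    (forall z, Udom Cc z ->
        Cmod (ks z) < 1 /\ 1 < Cmod (ku z) /\
        (forall kappa, kappa <> RtoC 0 ->
           (charEq Cc z kappa = RtoC 0 <-> kappa = ks z \/ kappa = ku z))) /\
    (* ks, ku extend continuously to S: their values on S are the limits from U *)
    (forall z0, Cmod z0 = 1 ->
        filterlim ks (within (Udom Cc) (locally z0)) (locally (ks z0)) /\
        filterlim ku (within (Udom Cc) (locally z0)) (locally (ku z0))) /\
    (* values at z = 1 and z = -1 *)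
    (Cc < 0 -> ks (RtoC 1) = RtoC (-1) /\ ku (RtoC 1) = RtoC 1) /\
    (0 < Cc -> ks (RtoC 1) = RtoC 1 /\ ku (RtoC 1) = RtoC (-1)) /\
    ks (RtoC (-1)) = RtoC 1 /\ ku (RtoC (-1)) = RtoC 1.
Proof.
  destruct (courant_bounds Cc hC) as [Hc0 Hc].
  exists (ks Cc), (ku Cc). split; [| split; [| split; [| split]]].
  - intros z Hz. apply ks_ku_on_U; assumption.
  - intros z0 Hz0. apply ks_ku_limits_circle; assumption.
  - apply ks_ku_at_1_neg; assumption.
  - apply ks_ku_at_1_pos; assumption.
  - apply ks_ku_at_m1; assumption.
Qed.
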